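(* Let $(\Gamma,w)$ and $(\Gamma',w')$ be loopless vertex-weighted metric graphs with genus $g$ and $g'$ respectively, and let $\phi:(\Gamma,w)\to(\Gamma',w')$ be a pseudo-harmonic morphism with respect to loopless models $(G,\ell)$ and $(G',\ell')$. Writing $v'=\phi(v)$: (i) $K_{(\Gamma,w)}=\phi^*K_{(\Gamma',w')}+R_\phi$, where $$R_\phi=\sum_{v\in V(G)}\Big(2\big(M_\phi(v)-1+w(v)-M_\phi(v)w'(v')\big)-\sum_{e\in E_v(G)}(U_\phi(e)-1)\Big)(v);$$ (ii) $$2g-2=\deg(\phi)(2g'-2)+\sum_{v\in V(G)}2\big(M_\phi(v)-1+w(v)-M_\phi(v)w'(v')\big)-\sum_{v\in V(G)}\sum_{e\in E_v(G)}(U_\phi(e)-1).$$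
   Context: A vertex-weighted metric graph $(\Gamma,w)$ with loopless model $(G,\ell)$: $G$ a finite connected loopless multigraph, $\ell:E(G)\to\mathbb{R}_{>0}$, $w:V(G)\to\mathbb{Z}_{\ge0}$. $val(v)$ is the number of edges incident to $v$, $E_v(G)$ the set of them. Genus: $g(\Gamma,w)=|E(G)|-|V(G)|+1+\sum_{v\in V(G)}w(v)$. Canonical divisor: $K_{(\Gamma,w)}=\sum_{v\in V(G)}(val(v)-2+2w(v))(v)$. A morphism of loopless models $\phi:(G,\ell)\to(G',\ell')$ is a map $V(G)\cup E(G)\to V(G')\cup E(G')$ with $\phi(V(G))\subseteq V(G')$, such that for each edge $e=xy$ either $\phi(e)\in V(G')$ and $\phi(x)=\phi(e)=\phi(y)$ (then $U_\phi(e)=0$), or $\phi(e)$ is an edge between $\phi(x),\phi(y)$ and $U_\phi(e)=\ell'(\phi(e))/\ell(e)$ is a positive integer. $\phi$ is pseudo-harmonic if for every $v\in V(G)$ the number $M_\phi(v)=\sum_{e\in E(G),v\in e,\phi(e)=e'}U_\phi(e)$ is the same for all $e'\in E(G')$ incident to $\phi(v)$. $\deg(\phi)=\sum_{\phi(e)=e'}U_\phi(e)$ for any $e'\in E(G')$ ($0$ if $G'$ has no edges). Pullback: $(\phi^*D')(v)=M_\phi(v)D'(\phi(v))$ for $v\in V(G)$. *)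

From HB Require Import structures.
From mathcomp Require Import all_boot all_order all_algebra.
From mathcomp Require Import reals.
Set Implicit Arguments. Unset Strict Implicit. Unset Printing Implicit Defensive.
Import Order.TTheory GRing.Theory Num.Theory.
Local Open Scope ring_scope.

Record lmodel (R : realType) := LModel {
  vert : finType;
  edge : finType;
  src : edge -> vert;
  tgt : edge -> vert;
  loopless : forall e, src e != tgt e;
  len : edge -> R;
  len_pos : forall e, 0 < len e;
  wt : vert -> nat;
  adj : rel vert := fun a b =>
    [exists e, ((src e == a) && (tgt e == b)) || ((src e == b) && (tgt e == a))];
  connected : forall x y, connect adj x y
}.

Section Defs.
Variable R : realType.

Definition incident (G : lmodel R) (e : edge G) (v : vert G) : bool :=
  (src e == v) || (tgt e == v).

Definition valence (G : lmodel R) (v : vert G) : nat :=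
  #|[set e : edge G | incident e v]|.

Definition genus (G : lmodel R) : int :=
  (#|edge G|%:Z - #|vert G|%:Z + 1 + (\sum_(v : vert G) wt v)%:Z)%R.

Definition divisor (G : lmodel R) := vert G -> int.

Definition canonical (G : lmodel R) : divisor G :=
  fun v => ((valence v)%:Z - 2 + 2 * (wt v)%:Z)%R.

(* A map V(G) u E(G) -> V(G') u E(G'), sending vertices to vertices;
   edges are sent to a vertex (inl) or an edge (inr). *)
Record lmap (G G' : lmodel R) := LMap {
  mapV : vert G -> vert G';
  mapE : edge G -> vert G' + edge G'
}.

Definition Uphi (G G' : lmodel R) (phi : lmap G G') (e : edge G) : nat :=
  match mapE phi e with
  | inl _ => 0%N
  | inr e' => Num.truncn (len e' / len e)
  end.

Definition is_morphism (G G' : lmodel R) (phi : lmap G G') : Prop :=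
  forall e : edge G,
    match mapE phi e with
    | inl v' => mapV phi (src e) = v' /\ mapV phi (tgt e) = v'
    | inr e' =>
        ((mapV phi (src e) == src e') && (mapV phi (tgt e) == tgt e')
         || (mapV phi (src e) == tgt e') && (mapV phi (tgt e) == src e'))
        /\ exists n : nat, (0 < n)%N /\ len e' / len e = n%:R
    end.

Definition Mloc (G G' : lmodel R) (phi : lmap G G') (v : vert G) (e' : edge G') : nat :=
  (\sum_(e : edge G | incident e v && (mapE phi e == inr e')) Uphi phi e)%N.

Definition pseudo_harmonic (G G' : lmodel R) (phi : lmap G G') : Prop :=
  forall (v : vert G) (e1 e2 : edge G'),
    incident e1 (mapV phi v) -> incident e2 (mapV phi v) ->
    Mloc phi v e1 = Mloc phi v e2.

(* M_phi(v): the common value of Mloc phi v e' for e' incident to phi(v)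
   (0 if phi(v) has no incident edge). *)
Definition Mphi (G G' : lmodel R) (phi : lmap G G') (v : vert G) : nat :=
  match [pick e' : edge G' | incident e' (mapV phi v)] with
  | Some e' => Mloc phi v e'
  | None => 0%N
  end.

(* deg(phi) = sum_{phi(e) = e'} U_phi(e) for any edge e' of G' (0 if none) *)
Definition degphi (G G' : lmodel R) (phi : lmap G G') : nat :=
  match [pick e' : edge G'] with
  | Some e' => (\sum_(e : edge G | mapE phi e == inr e') Uphi phi e)%N
  | None => 0%N
  end.

Definition pullback (G G' : lmodel R) (phi : lmap G G') (D' : divisor G') : divisor G :=
  fun v => ((Mphi phi v)%:Z * D' (mapV phi v))%R.

Definition ram_term (G G' : lmodel R) (phi : lmap G G') (v : vert G) : int :=
  (2 * ((Mphi phi v)%:Z - 1 + (wt v)%:Z - (Mphi phi v)%:Z * (wt (mapV phi v))%:Z))%R.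

Definition ramification (G G' : lmodel R) (phi : lmap G G') : divisor G :=
  fun v => (ram_term phi v
            - \sum_(e : edge G | incident e v) ((Uphi phi e)%:Z - 1))%R.

End Defs.
Arguments canonical {R} G _.

From HB Require Import structures.
From mathcomp Require Import all_boot all_order all_algebra.
From mathcomp Require Import reals ring.
Import Order.TTheory GRing.Theory Num.Theory.
Local Open Scope ring_scope.

Set Implicit Arguments. Unset Strict Implicit.

(* Pseudo-harmonicity says that at each vertex v the edges over a fixed edge
   e' at phi(v) carry total multiplicity M(v); summing over the val(phi v)
   edges at phi(v) gives sum_{e at v} U(e) = M(v) val(phi v), which is (i).
   Globally, each edge over e' has exactly one endpoint over a given endpoint
   v' of e', so sum_{phi v = v'} M(v) equals the edge degree of e'; this
   makes the fibre degree constant along edges of G', hence equal to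
   deg(phi) by connectivity.  Thus deg(phi^* D') = deg(phi) deg(D'), and
   summing (i) gives (ii) since deg K = 2g - 2 by the handshake lemma. *)

Section Model.
Variables (R : realType) (G : lmodel R).

Lemma incident_src (e : edge G) : incident e (src e).
Proof. by rewrite /incident eqxx. Qed.

Lemma incident_tgt (e : edge G) : incident e (tgt e).
Proof. by rewrite /incident eqxx orbT. Qed.

Lemma sum_incident (e : edge G) (f : vert G -> nat) :
  (\sum_(v | incident e v) f v = f (src e) + f (tgt e))%N.
Proof.
rewrite (bigD1 (src e)) ?incident_src //=.
congr (_ + _)%N; apply: big_pred1 => v /=.
rewrite /incident (eq_sym (src e)) (eq_sym (tgt e)).
have [->|_] := eqVneq v (src e); last by rewrite andbT.
by rewrite (negbTE (loopless e)).
Qed.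

Lemma sum_valence : (\sum_(v : vert G) valence v = 2 * #|edge G|)%N.
Proof.
under eq_bigr => v _ do rewrite /valence -sum1dep_card.
rewrite (exchange_big_dep xpredT) //= -sum1_card big_distrr /=.
by apply: eq_bigr => e _; rewrite sum_incident.
Qed.

Lemma sum_canonical : \sum_(v : vert G) canonical G v = 2 * genus G - 2.
Proof.
rewrite /canonical /genus !big_split /= sumr_const -mulr_sumr.
rewrite -!rmorph_sum /= sum_valence PoszM -[_ *+ #|_|]mulr_natr natz.
have -> : #|(xpredT : pred (vert G))| = #|vert G| by [].
move: (\sum_v wt v)%N #|edge G| #|vert G| => W E V; ring.
Qed.

End Model.

Section PseudoHarmonic.
Variables (R : realType) (G G' : lmodel R) (phi : lmap G G').
Hypotheses (phi_morph : is_morphism phi) (phi_harm : pseudo_harmonic phi).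

Lemma incident_mapE e e' v :
  mapE phi e = inr e' -> incident e v -> incident e' (mapV phi v).
Proof.
move=> phi_e; have := phi_morph e; rewrite phi_e => -[ends _].
case/orP: ends => /andP[/eqP Es /eqP Et]; case/orP => /eqP <-;
  by rewrite /incident ?Es ?Et eqxx ?orbT.
Qed.

Lemma card_endpoints_over e e' v' : mapE phi e = inr e' -> incident e' v' ->
  ((mapV phi (src e) == v') + (mapV phi (tgt e) == v'))%N = 1%N.
Proof.
move=> phi_e; have := phi_morph e; rewrite phi_e => -[ends _].
have ne := loopless e'; have ne' : tgt e' != src e' by rewrite eq_sym.
case/orP: ends => /andP[/eqP-> /eqP->]; case/orP => /eqP <-;
  by rewrite eqxx ?(negbTE ne) ?(negbTE ne').
Qed.

Lemma MphiE v e' : incident e' (mapV phi v) -> Mphi phi v = Mloc phi v e'.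
Proof.
move=> ie'; rewrite /Mphi; case: pickP => [e1 ie1|no_edge]; first exact: phi_harm.
by rewrite no_edge in ie'.
Qed.

Lemma sum_Uphi_incident v :
  (\sum_(e | incident e v) Uphi phi e = Mphi phi v * valence (mapV phi v))%N.
Proof.
have split_U e : incident e v -> Uphi phi e =
    (\sum_(e' | incident e' (mapV phi v)) (mapE phi e == inr e') * Uphi phi e)%N.
  move=> ie; case phi_e: (mapE phi e) => [x|e0].
    by rewrite /Uphi phi_e big1 // => e' _; rewrite muln0.
  rewrite (bigD1 e0) /=; last exact: incident_mapE ie.
  rewrite eqxx mul1n big1 ?addn0 // => e' /andP[_ ne'].
  by rewrite (inj_eq inr_inj) eq_sym (negbTE ne').
rewrite (eq_bigr _ split_U) exchange_big /valence -sum1dep_card big_distrr /=.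
apply: eq_bigr => e' ie'; rewrite muln1 (MphiE ie') /Mloc big_mkcondr /=.
by apply: eq_bigr => e _; case: (_ == _); rewrite ?mul1n ?mul0n.
Qed.

Definition edge_degree (e' : edge G') : nat :=
  (\sum_(e | mapE phi e == inr e') Uphi phi e)%N.

Definition fibre_degree (v' : vert G') : nat :=
  (\sum_(v | mapV phi v == v') Mphi phi v)%N.

Lemma fibre_degree_edge e' v' : incident e' v' -> fibre_degree v' = edge_degree e'.
Proof.
move=> ie'; rewrite /fibre_degree.
under eq_bigr => v /eqP phi_v do rewrite (@MphiE v e') ?phi_v // /Mloc big_mkcond.
rewrite exchange_big /edge_degree [RHS]big_mkcond; apply: eq_bigr => e _ /=.
have [phi_e|_] := eqP; last by rewrite big1 // => v _; rewrite andbF.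
transitivity (\sum_(v | incident e v) (mapV phi v == v') * Uphi phi e)%N.
  rewrite big_mkcond [RHS]big_mkcond; apply: eq_bigr => v _.
  by rewrite andbT; case: (mapV phi v == v'); case: (incident e v); rewrite /= ?mul1n.
by rewrite sum_incident -mulnDl (card_endpoints_over phi_e ie') mul1n.
Qed.

Lemma fibre_degreeE v' : fibre_degree v' = degphi phi.
Proof.
rewrite /degphi; case: pickP => [e0 _|no_edge]; last first.
  rewrite /fibre_degree big1 // => v _; rewrite /Mphi.
  by case: pickP => [e' _|//]; have := no_edge e'.
have closed_fibre : closed (@adj _ G') [pred x | fibre_degree x == edge_degree e0].
  move=> x y /existsP[e' ends] /=.
  by case/orP: ends => /andP[/eqP<- /eqP<-]; rewrite !inE
    (fibre_degree_edge (incident_src e')) (fibre_degree_edge (incident_tgt e')).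
have := closed_connect closed_fibre (connected (src e0) v').
by rewrite !inE (fibre_degree_edge (incident_src e0)) eqxx => /esym/eqP.
Qed.

Lemma sum_pullback (D' : divisor G') :
  \sum_(v : vert G) pullback phi D' v = (degphi phi)%:Z * \sum_(v' : vert G') D' v'.
Proof.
rewrite mulr_sumr (partition_big (mapV phi) xpredT) //=; apply: eq_bigr => v' _.
rewrite -(fibre_degreeE v') rmorph_sum /= mulr_suml.
by apply: eq_bigr => v /eqP phi_v; rewrite /pullback phi_v.
Qed.

Lemma canonical_pullback v :
  canonical G v = pullback phi (canonical G') v + ramification phi v.
Proof.
have sum_U1 : \sum_(e | incident e v) ((Uphi phi e)%:Z - 1)
    = (Mphi phi v)%:Z * (valence (mapV phi v))%:Z - (valence v)%:Z.
  rewrite sumrB -rmorph_sum /= sum_Uphi_incident PoszM; congr (_ - _).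
  by rewrite /valence -sum1dep_card rmorph_sum.
rewrite /canonical /pullback /ramification /ram_term sum_U1; ring.
Qed.

End PseudoHarmonic.

Theorem theorem6p10 (R : realType) (G G' : lmodel R) (phi : lmap G G') :
  is_morphism phi -> pseudo_harmonic phi ->
  (forall v : vert G,
     canonical G v = pullback phi (canonical G') v + ramification phi v) /\
  2 * genus G - 2 =
    (degphi phi)%:Z * (2 * genus G' - 2)
    + \sum_(v : vert G) ram_term phi v
    - \sum_(v : vert G) \sum_(e : edge G | incident e v) ((Uphi phi e)%:Z - 1).
Proof.
move=> phi_morph phi_harm; split; first exact: canonical_pullback.
rewrite -sum_canonical (eq_bigr _ (fun v _ => canonical_pullback phi_morph phi_harm v)).
by rewrite big_split /= sum_pullback // sum_canonical sumrB addrA.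
Qed.
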